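(* Let $n\ge1$ and let $\mathcal A,\mathcal S$ be subsets of $\{E_{ij}:1\le i,j\le n\}$, with associated digraphs $\mathcal G_{\mathcal A}$, $\mathcal G_{\mathcal S}$ on $\{1,\dots,n\}$ (arc $(i,j)$ iff $E_{ij}$ belongs to the set; arcs $(i,i)$ are self-loops). Suppose (i) each weakly connected component of $\mathcal G_{\mathcal S}$ is strongly connected with at least two nodes; (ii) the union digraph $\mathcal G_{\mathcal A}\cup\mathcal G_{\mathcal S}$ is strongly connected and has at least one self-loop. Then there exists $A\in\Sigma_{\rm r}(\mathcal A)$ such that the real Lie algebra generated by $\{A\}\cup\mathcal S$ equals $\mathfrak{gl}(n)$.
   Context: $E_{ij}$ is the $n\times n$ matrix unit; $\mathfrak{gl}(n)$ is the Lie algebra of real $n\times n$ matrices with commutator bracket. For $\mathcal A=\{g_1,\dots,g_k\}$, $\Sigma_{\rm r}(\mathcal A)=\{\sum_s l_sg_s: l_s\in\mathbb R,\ l_s\ne0\text{ for all }s\}$. Weakly connected component: connected component ignoring arc directions; strongly connected: all nodes mutually reachable via directed paths. *)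

From HB Require Import structures.
From mathcomp Require Import all_boot all_order all_algebra.
From mathcomp Require Import reals.
Set Implicit Arguments. Unset Strict Implicit. Unset Printing Implicit Defensive.
Import Order.TTheory GRing.Theory Num.Theory.
Local Open Scope ring_scope.

(* A set of matrix units {E_ij} is encoded by the set of index pairs (i,j). *)

Definition arcs (n : nat) (S : {set 'I_n * 'I_n}) : rel 'I_n :=
  fun i j => (i, j) \in S.

Definition warcs (n : nat) (S : {set 'I_n * 'I_n}) : rel 'I_n :=
  fun i j => ((i, j) \in S) || ((j, i) \in S).

Definition wcc_strong_ge2 (n : nat) (S : {set 'I_n * 'I_n}) : Prop :=
  (forall i j : 'I_n, connect (warcs S) i j -> connect (arcs S) i j) /\
  (forall i : 'I_n, exists j : 'I_n, j != i /\ connect (warcs S) i j).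

Definition strongly_connected (n : nat) (S : {set 'I_n * 'I_n}) : Prop :=
  forall i j : 'I_n, connect (arcs S) i j.

Definition has_self_loop (n : nat) (S : {set 'I_n * 'I_n}) : Prop :=
  exists i : 'I_n, (i, i) \in S.

Definition Sigma_r (R : realType) (n : nat) (A : {set 'I_n * 'I_n})
  (M : 'M[R]_n) : Prop :=
  exists l : 'I_n * 'I_n -> R,
    (forall p, p \in A -> l p != 0) /\
    M = \sum_(p in A) l p *: delta_mx p.1 p.2.

Definition lie_closed (R : realType) (n : nat) (L : 'M[R]_n -> Prop) : Prop :=
  L 0 /\
  (forall (a : R) x y, L x -> L y -> L (a *: x + y)) /\
  (forall x y, L x -> L y -> L (x *m y - y *m x)).

Definition lie_gen (R : realType) (n : nat) (X : 'M[R]_n -> Prop)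
  (M : 'M[R]_n) : Prop :=
  forall L : 'M[R]_n -> Prop, lie_closed L -> (forall x, X x -> L x) -> L M.

From HB Require Import structures.
From mathcomp Require Import all_boot all_order all_algebra.
From mathcomp Require Import reals.
From mathcomp Require Import ring zify.
From Stdlib Require Import Classical_Prop.
Import Order.TTheory GRing.Theory Num.Theory.
Local Open Scope ring_scope.
Set Implicit Arguments. Unset Strict Implicit. Unset Printing Implicit Defensive.

(* Let L be a Lie subalgebra containing A0 and the units E_pq, (p,q) in S.
   Every node x has a partner x' != x in its strongly connected S-component, so
   E_xx', E_x'x and the coroot E_xx - E_x'x' lie in L.  The adjoint action of an
   integer diagonal matrix D multiplies E_pq by the weight d_p - d_q; as it has
   finitely many eigenvalues, L contains the weight components of its elements.
   Filtering A0 by the coroots of i and j isolates, for an arc (i,j) of A with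
   E_ij not in L, the element A0_ij E_ij + A0_j'i' E_j'i'.  A diagonal D in L
   with weight 3 at a self-loop node u0 and weights 0 or 1 elsewhere (3 E_u0u0
   if the loop is in S, the diagonal part of A0, where the loop has coefficient
   3, if it is in A) separates these two units whenever u0 is one of i, i', j,
   j'; otherwise bracketing with E_ju0 gives E_iu0, and bracketing E_u0i with it
   gives E_u0j.  Hence E_xu0 in L propagates backwards and E_u0x forwards along
   the arcs of the strongly connected digraph G_A u G_S, which yields every
   off-diagonal unit; D, whose trace is nonzero, then yields the diagonal. *)

Lemma connect_rel_ind (T : finType) (e : rel T) (r : T -> T -> Prop) :
  (forall x, r x x) -> (forall x y z, r x y -> e y z -> r x z) ->
  forall x y, connect e x y -> r x y.
Proof.
move=> r_refl r_step x _ /connectP[s xs ->].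
suff step_path z : r x z -> path e z s -> r x (last z s) by exact: step_path.
elim: s z {xs} => [|y s IHs] z //= rxz /andP[ezy ys].
exact: IHs (r_step _ _ _ rxz ezy) ys.
Qed.

Section MatrixUnits.
Variables (R : comPzRingType) (n : nat).
Local Notation E := (@delta_mx R n n).

Definition weight_mx (w : 'I_n -> int) : 'M[R]_n := diag_mx (\row_x (w x)%:~R).

Definition coroot (i j : 'I_n) (x : 'I_n) : int := (x == i)%:Z - (x == j)%:Z.

Definition weight_part (w : 'I_n -> int) (k : int) (X : 'M[R]_n) : 'M[R]_n :=
  \matrix_(p, q) (if w p - w q == k then X p q else 0).

Lemma weight_mx_coroot i j : weight_mx (coroot i j) = E i i - E j j.
Proof.
apply/matrixP => p q; rewrite !mxE /coroot.
have [<-|pq] := eqVneq p q; first by rewrite !andbb mulr1n intrB.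
have pq_neq x : (p == x) && (q == x) = false.
  by apply/andP => -[/eqP px /eqP qx]; rewrite px qx eqxx in pq.
by rewrite mulr0n !pq_neq subrr.
Qed.

Lemma comm_delta_mx_trans i j k : i != k -> E i j *m E j k - E j k *m E i j = E i k.
Proof.
by move=> ik; rewrite !mul_delta_mx_cond eqxx eq_sym (negbTE ik) mulr0n subr0.
Qed.

Lemma comm_delta_mx_swap i j : E i j *m E j i - E j i *m E i j = E i i - E j j.
Proof. by rewrite !mul_delta_mx. Qed.

Lemma comm_pair_delta_mx a b i j i' j' z : i' != j -> z != i -> z != j' ->
  (a *: E i j + b *: E j' i') *m E j z - E j z *m (a *: E i j + b *: E j' i') =
  a *: E i z.
Proof.
move=> i'j zi zj'; rewrite mulmxDl mulmxDr -!scalemxAl -!scalemxAr.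
rewrite !mul_delta_mx_cond eqxx (negbTE i'j) (negbTE zi) (negbTE zj').
by rewrite !mulr0n mulr1n !scaler0 !addr0 subr0.
Qed.

Lemma comm_delta_mx_pair a b i j i' j' z : j' != i -> z != j -> z != i' ->
  E z i *m (a *: E i j + b *: E j' i') - (a *: E i j + b *: E j' i') *m E z i =
  a *: E z j.
Proof.
move=> j'i zj zi'; rewrite mulmxDl mulmxDr -!scalemxAl -!scalemxAr.
rewrite !mul_delta_mx_cond eqxx ![i == _]eq_sym ![j == _]eq_sym ![i' == _]eq_sym.
rewrite (negbTE j'i) (negbTE zj) (negbTE zi').
by rewrite !mulr0n mulr1n !scaler0 !addr0 subr0.
Qed.

Lemma sum_delta_mxE (A : {set 'I_n * 'I_n}) (l : 'I_n * 'I_n -> R) x y :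
  (\sum_(p in A) l p *: E p.1 p.2) x y = if (x, y) \in A then l (x, y) else 0.
Proof.
rewrite summxE.
under eq_bigr => p _ do rewrite !mxE -xpair_eqE -surjective_pairing eq_sym mulr_natr.
case: ifPn => [xyA|xynA]; last by rewrite big1 // => p pA; case: eqP pA xynA => // ->->.
by rewrite (bigD1 (x, y)) //= eqxx big1 ?addr0 // => p /andP[_ /negbTE->].
Qed.
End MatrixUnits.

Arguments weight_mx {R n} w.
Arguments weight_part {R n} w k X.

Section LieSubalgebra.
Variables (R : realType) (n : nat) (L : 'M[R]_n -> Prop).
Hypothesis HL : lie_closed L.
Local Notation E := (@delta_mx R n n).

Lemma lie0 : L 0. Proof. by case: HL. Qed.

Lemma lieZD a x y : L x -> L y -> L (a *: x + y).
Proof. by case: HL => _ [+ _]; apply. Qed.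

Lemma lie_comm x y : L x -> L y -> L (x *m y - y *m x).
Proof. by case: HL => _ [_]; apply. Qed.

Lemma lieZ a x : L x -> L (a *: x).
Proof. by move=> Lx; have := lieZD a Lx lie0; rewrite addr0. Qed.

Lemma lieD x y : L x -> L y -> L (x + y).
Proof. by move=> Lx Ly; have := lieZD 1 Lx Ly; rewrite scale1r. Qed.

Lemma lieB x y : L x -> L y -> L (x - y).
Proof. by move=> Lx Ly; rewrite -scaleN1r; apply: lieD Lx (lieZ _ Ly). Qed.

Lemma lie_sum (I : finType) (P : pred I) (F : I -> 'M[R]_n) :
  (forall i, P i -> L (F i)) -> L (\sum_(i | P i) F i).
Proof. by move=> LF; apply: big_ind => //; [exact: lie0 | exact: lieD]. Qed.

Definition linked i j := i = j \/ L (E i j).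

Lemma linked_neq i j : i != j -> linked i j -> L (E i j).
Proof. by move=> ij [eij|//]; rewrite eij eqxx in ij. Qed.

Lemma linked_trans j i k : linked i j -> linked j k -> linked i k.
Proof.
move=> [->//|Lij] [<-|Ljk]; first by right.
have [->|ik] := eqVneq i k; [by left | right].
by rewrite -(comm_delta_mx_trans _ j ik); apply: lie_comm.
Qed.

Lemma linked_connect (S : {set 'I_n * 'I_n}) :
  (forall p, p \in S -> L (E p.1 p.2)) ->
  forall i j, connect (arcs S) i j -> linked i j.
Proof.
move=> LS; apply: connect_rel_ind => [x|x y z xy yz]; first by left.
exact: linked_trans xy (or_intror (LS (y, z) yz)).
Qed.

Definition partner i i' := [/\ i' != i, L (E i i') & L (E i' i)].

Lemma partner_of_wcc (S : {set 'I_n * 'I_n}) :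
  (forall p, p \in S -> L (E p.1 p.2)) -> wcc_strong_ge2 S ->
  forall x, exists x', partner x x'.
Proof.
move=> LS [strong ge2] x; have [x' [x'x wxx']] := ge2 x.
have wx'x : connect (warcs S) x' x.
  by rewrite (sym_connect_sym (fun a b => orbC _ _)).
exists x'; split => //; apply: linked_neq (linked_connect LS (strong _ _ _)) => //.
by rewrite eq_sym.
Qed.

Lemma lie_coroot i i' : partner i i' -> L (weight_mx (coroot i i')).
Proof.
by case=> _ Lii' Li'i; rewrite weight_mx_coroot -comm_delta_mx_swap; apply: lie_comm.
Qed.

Lemma lie_ad_weight w m X : L (weight_mx w) -> L X ->
  L (\matrix_(p, q) (((w p - w q)%:~R - m) * X p q)).
Proof.
move=> Lw LX; have := lieZD (- m) LX (lie_comm Lw LX); congr L.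
by apply/matrixP => p q; rewrite mul_diag_mx mul_mx_diag !mxE intrB; ring.
Qed.

Lemma lie_ad_weight_prod w (s : seq R) X : L (weight_mx w) -> L X ->
  L (\matrix_(p, q) ((\prod_(m <- s) ((w p - w q)%:~R - m)) * X p q)).
Proof.
move=> Lw LX; elim: s => [|m s IHs].
  by congr L: LX; apply/matrixP => p q; rewrite mxE big_nil mul1r.
congr L: (lie_ad_weight m Lw IHs); apply/matrixP => p q.
by rewrite !mxE big_cons mulrA.
Qed.

Lemma lie_weight_part w k X : L (weight_mx w) -> L X -> L (weight_part w k X).
Proof.
move=> Lw LX.
pose weights := [seq w pq.1 - w pq.2 | pq <- enum {: 'I_n * 'I_n}].
pose s : seq R := [seq m%:~R | m <- weights & m != k].
(* [c] is the value at [k] of the polynomial vanishing at every other weight. *)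
pose c := \prod_(m <- s) (k%:~R - m).
have c_neq0 : c != 0.
  rewrite prodf_seq_neq0; apply/allP => x /mapP[m].
  rewrite mem_filter => /andP[mk _] ->.
  by rewrite -intrB intr_eq0 subr_eq0 eq_sym.
congr L: (lieZ c^-1 (lie_ad_weight_prod s Lw LX)); apply/matrixP => p q.
rewrite !mxE; case: eqP => [->|wpq]; first by rewrite mulrA mulVf ?mul1r.
suff /eqP-> : \prod_(m <- s) ((w p - w q)%:~R - m) == 0 by rewrite mul0r mulr0.
rewrite prodf_seq_eq0; apply/hasP; exists (w p - w q)%:~R; rewrite ?subrr ?eqxx //.
apply/mapP; exists (w p - w q) => //.
rewrite mem_filter; apply/andP; split; first exact/eqP.
by apply/mapP; exists (p, q); rewrite ?mem_enum.
Qed.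

Lemma lie_weight_sep w X a b i j k l : L (weight_mx w) -> L X ->
  X = a *: E i j + b *: E k l -> a != 0 -> w i - w j != w k - w l -> L (E i j).
Proof.
move=> Lw LX eX a0 wne.
congr L: (lieZ a^-1 (lie_weight_part (w i - w j) Lw LX)); apply/matrixP => p q.
rewrite eX !mxE -!xpair_eqE.
have [[-> ->]|pq_ij] := eqVneq (p, q) (i, j).
  have [[ik jl]|ij_kl] := eqVneq (i, j) (k, l); first by rewrite ik jl eqxx in wne.
  by rewrite !eqxx mulr1 mulr0 addr0 mulVf.
rewrite mulr0 add0r.
have [[-> ->]|pq_kl] := eqVneq (p, q) (k, l).
  by rewrite eq_sym (negbTE wne) mulr0.
by rewrite mulr0 if_same mulr0.
Qed.

Lemma lie_root_pair X i i' j j' :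
  uniq [:: i; i'; j; j'] -> L X -> partner i i' -> partner j j' ->
  L (X i j *: E i j + X j' i' *: E j' i').
Proof.
move=> uq LX Pi Pj.
have := lie_weight_part (-1) (lie_coroot Pj) (lie_weight_part 1 (lie_coroot Pi) LX).
(* Only (i, j) and (j', i') have weight 1 for coroot i i' and -1 for coroot j j'. *)
congr L; apply/matrixP => p q; rewrite !mxE /coroot.
move: uq; rewrite /= !inE !negb_or => /and4P[/and3P[ii' ij ij'] /andP[i'j i'j'] jj' _].
have ne := (negbTE ii', negbTE ij, negbTE ij', negbTE i'j, negbTE i'j', negbTE jj').
have en :=
  (eq_sym i' i, eq_sym j i, eq_sym j' i, eq_sym j i', eq_sym j' i', eq_sym j' j).
have [->|pi] := eqVneq p i; last have [->|pi'] := eqVneq p i';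
  last have [->|pj] := eqVneq p j; last have [->|pj'] := eqVneq p j';
  (have [->|qi] := eqVneq q i; last have [->|qi'] := eqVneq q i';
   last have [->|qj] := eqVneq q j; last have [->|qj'] := eqVneq q j');
  rewrite ?eqxx ?en ?ne ?(negbTE pi, negbTE pi', negbTE pj, negbTE pj')
    ?(negbTE qi, negbTE qi', negbTE qj, negbTE qj') /= ?mulr0 ?mulr1 ?addr0 ?add0r //.
Qed.

Lemma unlinked_partners_uniq i i' j j' : i != j -> ~ L (E i j) ->
  partner i i' -> partner j j' -> uniq [:: i; i'; j; j'].
Proof.
move=> ij nLij [i'i Lii' _] [j'j _ Lj'j].
have i'j : i' != j by apply: contraPneq nLij => <-.
have ij' : i != j' by apply: contraPneq nLij => ->.
have i'j' : i' != j'.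
  apply: contraPneq nLij => e; apply; apply: (linked_neq ij).
  by apply: (@linked_trans i'); right; rewrite // e.
by rewrite /= !inE !negb_or eq_sym i'i ij ij' i'j i'j' eq_sym j'j.
Qed.

Lemma lie_diag_part X : (forall x, exists x', partner x x') -> L X ->
  L (diag_mx (\row_x X x x)).
Proof.
move=> partners LX.
suff [M [LM M_diag M_offdiag]] : exists M, [/\ L M, forall p, M p p = X p p &
    forall p q, p \in enum 'I_n -> p != q -> M p q = 0].
  congr L: LM; apply/matrixP => p q; rewrite !mxE.
  have [<-|pq] := eqVneq p q; first by rewrite M_diag mulr1n.
  by rewrite mulr0n M_offdiag ?mem_enum.
elim: (enum 'I_n) => [|v s [M [LM M_diag M_offdiag]]]; first by exists X.
have [v' Pv] := partners v; have [v'v _ _] := Pv.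
exists (weight_part (coroot v v') 0 M); split.
- exact: lie_weight_part (lie_coroot Pv) LM.
- by move=> p; rewrite mxE subrr eqxx M_diag.
move=> p q; rewrite inE mxE => /orP[/eqP->|ps] pq; last by rewrite M_offdiag // if_same.
rewrite /coroot eqxx (eq_sym v v') (negbTE v'v) (eq_sym q v) (negbTE pq).
by case: (q == v').
Qed.

Lemma exists_u0_weight X u0 (a : 'I_n -> int) :
  (forall x, exists x', partner x x') -> L X -> (forall x, X x x = (a x)%:~R) ->
  (forall x, x != u0 -> 0 <= a x <= 1) -> L (E u0 u0) \/ a u0 = 3 ->
  exists d, [/\ L (weight_mx d), d u0 = 3 & forall x, x != u0 -> 0 <= d x <= 1].
Proof.
move=> partners LX Xdiag a_small [Lu0|a_u0]; last first.
  exists a; split => //; congr L: (lie_diag_part partners LX).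
  by apply/matrixP => p q; rewrite !mxE Xdiag.
exists (fun x => if x == u0 then 3 else 0).
split => [||x /negbTE->] //; last by rewrite eqxx.
congr L: (lieZ 3 Lu0); apply/matrixP => p q; rewrite !mxE /=.
have [->|pu] := eqVneq p u0; last by rewrite mul0rn mulr0.
by rewrite andTb [u0 == q]eq_sym mulr_natr.
Qed.

Lemma lie_full_of_offdiag w (i0 : 'I_n) : (forall p q, p != q -> L (E p q)) ->
  L (weight_mx w) -> \sum_x w x != 0 -> forall M, L M.
Proof.
move=> Loff Lw sum_neq0.
have Ldiff x : L (E x x - E i0 i0).
  have [->|xi] := eqVneq x i0; first by rewrite subrr; apply: lie0.
  by rewrite -comm_delta_mx_swap; apply: lie_comm; apply: Loff; rewrite // eq_sym.
have Li0 : L (E i0 i0).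
  have trace_part : weight_mx w - \sum_x (w x)%:~R *: (E x x - E i0 i0) =
      (\sum_x w x)%:~R *: E i0 i0.
    rewrite /weight_mx diag_mx_sum_delta rmorph_sum scaler_suml -sumrB.
    by apply: eq_bigr => x _; rewrite mxE scalerBr opprB addrC subrK.
  have := lieB Lw (lie_sum (P := predT) (fun x _ => lieZ (w x)%:~R (Ldiff x))).
  rewrite trace_part.
  by move/(lieZ ((\sum_x w x)%:~R)^-1); rewrite scalerA mulVf ?scale1r // intr_eq0.
have LE p q : L (E p q).
  have [<-|pq] := eqVneq p q; last exact: Loff.
  by rewrite -(subrK (E i0 i0) (E p p)); apply: lieD.
move=> M; rewrite (matrix_sum_delta M).
by apply: lie_sum => p _; apply: lie_sum => q _; apply: lieZ.
Qed.

Section Propagation.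
Variables (A S : {set 'I_n * 'I_n}) (A0 : 'M[R]_n) (u0 : 'I_n) (d : 'I_n -> int).
Hypothesis LS : forall p, p \in S -> L (E p.1 p.2).
Hypothesis LA0 : L A0.
Hypothesis A0_neq0 : forall i j, (i, j) \in A -> A0 i j != 0.
Hypothesis Ld : L (weight_mx d).
Hypothesis d_u0 : d u0 = 3.
Hypothesis d_small : forall x, x != u0 -> 0 <= d x <= 1.
Hypothesis partners : forall x, exists x', partner x x'.

Lemma unlinked_arc i j : (i, j) \in A :|: S -> ~ linked i j ->
  [/\ (i, j) \in A, i != j & ~ L (E i j)].
Proof.
move=> ijAS nlij; have ij : i != j by apply: contraPneq nlij => ->; apply; left.
have nLij : ~ L (E i j) by move=> Lij; apply: nlij; right.
split=> //; move: ijAS; rewrite in_setU => /orP[//|ijS].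
by case: nLij; apply: (LS ijS).
Qed.

Lemma weight_quad_neq a b c e : uniq [:: a; b; c; e] -> u0 \in [:: a; b; c; e] ->
  d a + d b != d c + d e.
Proof.
rewrite /= !inE !negb_or => /and4P[/and3P[ab ac ae] /andP[bc be] ce _].
case/or4P=> /eqP u0E; rewrite -{}u0E ?[u0 == _]eq_sym in ab ac ae bc be ce *.
all: rewrite d_u0.
- by move: (d_small ab) (d_small ac) (d_small ae); lia.
- by move: (d_small ab) (d_small bc) (d_small be); lia.
- by move: (d_small ac) (d_small bc) (d_small ce); lia.
- by move: (d_small ae) (d_small be) (d_small ce); lia.
Qed.

Lemma unlinked_arc_avoids_u0 i i' j j' : (i, j) \in A -> i != j -> ~ L (E i j) ->
  partner i i' -> partner j j' -> u0 \notin [:: i; i'; j; j'].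
Proof.
move=> ijA ij nLij Pi Pj; have uq := unlinked_partners_uniq ij nLij Pi Pj.
apply/negP => u0_in; apply: nLij.
apply: (lie_weight_sep Ld (lie_root_pair uq LA0 Pi Pj) erefl (A0_neq0 ijA)).
by apply: contraNneq (weight_quad_neq uq u0_in) => e; apply/eqP; lia.
Qed.

Lemma linked_to_u0_pred i j : (i, j) \in A :|: S -> linked j u0 -> linked i u0.
Proof.
move=> ijAS lju; have [->|iu] := eqVneq i u0; first by left.
have [lij|/(unlinked_arc ijAS)[ijA ij nLij]] := classic (linked i j).
  exact: linked_trans lij lju.
have [i' Pi] := partners i; have [j' Pj] := partners j.
have avoid := unlinked_arc_avoids_u0 ijA ij nLij Pi.
have ju : j != u0.
  by apply: contraNneq (avoid _ Pj) => ->; rewrite !inE eqxx !orbT.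
have Lju := linked_neq ju lju.
(* Otherwise u0 could serve as the partner of j. *)
have nLuj : ~ L (E u0 j).
  move=> Luj; have Pju : partner j u0 by split; rewrite // eq_sym.
  by move: (avoid _ Pju); rewrite !inE eqxx !orbT.
have j'u : j' != u0 by case: Pj => _ _ Lj'j; apply: contraPneq nLuj => <-.
have uq := unlinked_partners_uniq ij nLij Pi Pj.
move: (uq); rewrite /= !inE !negb_or => /and4P[_ /andP[i'j _] _ _]; right.
have := lieZ (A0 i j)^-1 (lie_comm (lie_root_pair uq LA0 Pi Pj) Lju).
by rewrite comm_pair_delta_mx ?scalerA ?mulVf ?scale1r ?A0_neq0 // eq_sym.
Qed.

Lemma linked_from_u0_succ i j : (i, j) \in A :|: S -> linked u0 i -> linked u0 j.
Proof.
move=> ijAS lui; have [<-|ju] := eqVneq u0 j; first by left.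
have [lij|/(unlinked_arc ijAS)[ijA ij nLij]] := classic (linked i j).
  exact: linked_trans lui lij.
have [i' Pi] := partners i; have [j' Pj] := partners j.
have avoid i'' (Pi'' : partner i i'') := unlinked_arc_avoids_u0 ijA ij nLij Pi'' Pj.
have iu : u0 != i.
  by apply: contraNneq (avoid _ Pi) => <-; rewrite !inE eqxx.
have Lui := linked_neq iu lui.
have nLiu : ~ L (E i u0).
  move=> Liu; have Piu : partner i u0 by split.
  by move: (avoid _ Piu); rewrite !inE eqxx !orbT.
have i'u : u0 != i' by case: Pi => _ Lii' _; apply: contraPneq nLiu => ->.
have uq := unlinked_partners_uniq ij nLij Pi Pj.
move: (uq); rewrite /= !inE !negb_or => /and4P[/and3P[_ _ ij'] _ _ _]; right.
have := lieZ (A0 i j)^-1 (lie_comm Lui (lie_root_pair uq LA0 Pi Pj)).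
by rewrite comm_delta_mx_pair ?scalerA ?mulVf ?scale1r ?A0_neq0 // eq_sym.
Qed.

Lemma lie_offdiag : strongly_connected (A :|: S) -> forall p q, p != q -> L (E p q).
Proof.
move=> Asc p q pq; apply: (linked_neq pq); apply: (@linked_trans u0).
- apply: (connect_rel_ind (r := fun x y => linked y u0 -> linked x u0) _ _ (Asc p u0)).
  + by [].
  + by move=> x y z lxy yz /(linked_to_u0_pred yz).
  + by left.
- apply: (connect_rel_ind (r := fun x y => linked u0 x -> linked u0 y) _ _ (Asc u0 q)).
  + by [].
  + by move=> x y z lxy yz /lxy /(linked_from_u0_succ yz).
  + by left.
Qed.

Lemma lie_total : strongly_connected (A :|: S) -> forall M, L M.
Proof.
move=> Asc; apply: (lie_full_of_offdiag u0 (lie_offdiag Asc) Ld).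
rewrite (bigD1 u0) //= d_u0; apply/lt0r_neq0/ltr_wpDr => //.
by apply: sumr_ge0 => x /d_small /andP[].
Qed.

End Propagation.

End LieSubalgebra.

Theorem lemma9 (R : realType) (n : nat) (Hn : (0 < n)%N)
  (A S : {set 'I_n * 'I_n}) :
  wcc_strong_ge2 S ->
  strongly_connected (A :|: S) ->
  has_self_loop (A :|: S) ->
  exists A0 : 'M[R]_n,
    Sigma_r A A0 /\
    (forall M : 'M[R]_n,
       lie_gen (fun x => x = A0 \/ exists p, p \in S /\ x = delta_mx p.1 p.2) M).
Proof.
move=> Swcc Asc [u0 u0_loop].
pose l p : R := if p == (u0, u0) then 3 else 1.
have l_neq0 p : l p != 0 by rewrite /l; case: ifP; rewrite ?oner_eq0 ?pnatr_eq0.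
pose A0 := \sum_(p in A) l p *: delta_mx p.1 p.2.
exists A0; split; first by exists l.
move=> M L HL gen.
have LS p : p \in S -> L (delta_mx p.1 p.2) by move=> pS; apply: gen; right; exists p.
have LA0 : L A0 by apply: gen; left.
have A0_neq0 i j : (i, j) \in A -> A0 i j != 0 by move=> ijA; rewrite sum_delta_mxE ijA.
have partners := partner_of_wcc HL LS Swcc.
pose a x : int := if (x, x) \in A then (if x == u0 then 3 else 1) else 0.
have A0_diag x : A0 x x = (a x)%:~R.
  rewrite sum_delta_mxE /a /l xpair_eqE andbb.
  by case: ((x, x) \in A); case: (x == u0).
have a_small x : x != u0 -> 0 <= a x <= 1.
  by move/negbTE => xu; rewrite /a xu; case: ifP.
have u0_weight : L (delta_mx u0 u0) \/ a u0 = 3.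
  move: u0_loop; rewrite in_setU => /orP[u0A|u0S]; last by left; exact: (LS _ u0S).
  by right; rewrite /a u0A eqxx.
have [d [Ld d_u0 d_small]] :=
  exists_u0_weight HL partners LA0 A0_diag a_small u0_weight.
exact: (lie_total HL LS LA0 A0_neq0 Ld d_u0 d_small partners Asc M).
Qed.
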